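(* Let $A$ be a finite set. Then every irreducible sofic subshift $X \subset A^{\mathbb Z}$ is a W-subshift. In particular, every irreducible subshift of finite type $X\subset A^{\mathbb Z}$ is a W-subshift.
   Context: A subshift of $A^{\mathbb Z}$ is a closed shift-invariant subset. $X$ is of finite type if there are a finite $\Omega\subset\mathbb Z$ and $\mathcal P\subset A^\Omega$ with $X=\{x:(gx)|_\Omega\in\mathcal P\ \forall g\in\mathbb Z\}$, where $(gx)(h)=x(h-g)$. $X$ is sofic if there are a finite set $B$, a subshift of finite type $Y\subset B^{\mathbb Z}$ and a surjective continuous shift-equivariant map $Y\to X$. $L(X)$ is the set of finite words (including the empty word) appearing as $x(i)\cdots x(j)$ in some $x\in X$; $|w|$ is word length. $X$ is irreducible if for all $u,v\in L(X)$ there is $w\in L(X)$ with $uwv\in L(X)$. $X$ is a W-subshift if there is an integer $n_0\ge0$ such that for all $u,v\in L(X)$ there is $c\in L(X)$ with $|c|\le n_0$ and $ucv\in L(X)$. *)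

From mathcomp Require Import all_boot all_order all_algebra.
Set Implicit Arguments. Unset Strict Implicit. Unset Printing Implicit Defensive.
Import GRing.Theory Num.Theory.
Local Open Scope ring_scope.

Definition shift (A : Type) (g : int) (x : int -> A) : int -> A :=
  fun h => x (h - g).

(* Closedness in the product topology of A^Z (A discrete):
   x belongs to X whenever every central window of x is matched by
   some element of X. *)
Definition closed_conf (A : Type) (X : (int -> A) -> Prop) : Prop :=
  forall x : int -> A,
    (forall n : nat, exists y, X y /\
        forall h : int, `|h| <= n%:Z -> y h = x h) -> X x.

Definition shift_invariant (A : Type) (X : (int -> A) -> Prop) : Prop :=
  forall (g : int) (x : int -> A), X x -> X (shift g x).

Definition subshift (A : finType) (X : (int -> A) -> Prop) : Prop :=
  closed_conf X /\ shift_invariant X.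

(* Finite type: a finite window Omega (a finite list of integers) and a
   set P of patterns on Omega (a pattern is the list of values on Omega). *)
Definition is_SFT (A : finType) (X : (int -> A) -> Prop) : Prop :=
  exists (Omega : seq int) (P : seq A -> Prop),
    forall x : int -> A,
      X x <-> (forall g : int, P [seq shift g x w | w <- Omega]).

Definition continuous_on (B A : Type) (Y : (int -> B) -> Prop)
  (phi : (int -> B) -> (int -> A)) : Prop :=
  forall y, Y y -> forall n : nat, exists m : nat, forall y', Y y' ->
    (forall h : int, `|h| <= m%:Z -> y' h = y h) ->
    forall h : int, `|h| <= n%:Z -> phi y' h = phi y h.

Definition sofic (A : finType) (X : (int -> A) -> Prop) : Prop :=
  exists (B : finType) (Y : (int -> B) -> Prop)
         (phi : (int -> B) -> (int -> A)),
    subshift Y /\ is_SFT Y /\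
        (forall y, Y y -> X (phi y)) /\
        (forall x, X x -> exists y, Y y /\ forall h, phi y h = x h) /\
        continuous_on Y phi /\
        (forall (g : int) y, Y y -> forall h, phi (shift g y) h = shift g (phi y) h).

(* w appears as x(i) ... x(i + |w| - 1) in x (empty word included) *)
Definition occurs (A : Type) (w : seq A) (x : int -> A) : Prop :=
  exists i : int, w = [seq x (i + k%:Z) | k <- iota 0 (size w)].

Definition lang (A : Type) (X : (int -> A) -> Prop) (w : seq A) : Prop :=
  exists x, X x /\ occurs w x.

Definition irreducible (A : Type) (X : (int -> A) -> Prop) : Prop :=
  forall u v, lang X u -> lang X v -> exists w, lang X w /\ lang X (u ++ w ++ v).

Definition W_subshift (A : Type) (X : (int -> A) -> Prop) : Prop :=
  exists n0 : nat, forall u v, lang X u -> lang X v ->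
    exists c, lang X c /\ (size c <= n0)%N /\ lang X (u ++ c ++ v).

From mathcomp Require Import all_boot all_order all_algebra zify.
From mathcomp Require Import boolp.
Set Implicit Arguments. Unset Strict Implicit. Unset Printing Implicit Defensive.
Import GRing.Theory Num.Theory.
Local Open Scope ring_scope.

(* A factor map [phi] from an SFT [Y] onto [X] is a sliding block code of some
   radius [m] (uniform continuity, by compactness), and [Y] has some memory
   [R].  Put [K = max m R] and attach to each word [w] of [X] its boundary
   data: the pairs of [Y]-blocks of length [2K] sitting at the two ends of an
   occurrence of [w] in the image of some [y] in [Y].  If the boundary data of
   [w'] contain those of [w], then [w'] may replace [w] in any word [p w s] of
   [X]: splice a preimage of [w'] into a preimage of [p w s] along matching
   blocks; memory [R <= K] keeps the spliced point in [Y], radius [m <= K]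
   keeps its image equal to [p w' s].  There are finitely many possible
   boundary data, so every connecting word given by irreducibility can be
   replaced by one of bounded length. *)

Lemma finite_uniform_bound (I : finType) (Q : I -> nat -> Prop) :
  (forall i N N', (N <= N')%N -> Q i N -> Q i N') ->
  (forall i, exists N, Q i N) -> exists N, forall i, Q i N.
Proof.
move=> mono ex.
suff [N HN]: exists N, forall i, i \in enum I -> Q i N.
  by exists N => i; apply: HN; rewrite mem_enum.
elim: (enum I) => [|a s [N HN]]; first by exists 0%N.
have [Na Ha] := ex a.
exists (maxn N Na) => i; rewrite inE => /orP [/eqP -> | Hi].
  by apply: mono Ha; apply: leq_maxr.
by apply: mono (HN _ Hi); apply: leq_maxl.
Qed.

Lemma bounded_fiber_representatives (W : Type) (T : finType)
    (L : W -> Prop) (f : W -> T) (len : W -> nat) :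
  exists N, forall w, L w ->
    exists w', [/\ L w', (len w' <= N)%N & f w' = f w].
Proof.
pose Q t N := forall w, L w -> f w = t ->
  exists w', [/\ L w', (len w' <= N)%N & f w' = t].
have [N HN] : exists N, forall t, Q t N.
  apply: finite_uniform_bound => [t N N' le_NN' HN w Lw fw | t].
    have [w' [Lw' le_w' fw']] := HN w Lw fw.
    by exists w'; split=> //; apply: leq_trans le_NN'.
  case: (pselect (exists w, L w /\ f w = t)) => [[w [Lw <-]] | no_w].
    by exists (len w) => w0 _ _; exists w.
  by exists 0%N => w Lw fw; case: no_w; exists w.
by exists N => w Lw; exact: (HN (f w) w Lw erefl).
Qed.

Definition appears (A : Type) (x : int -> A) (i : int) (u : seq A) :=
  u = [seq x (i + k%:Z) | k <- iota 0 (size u)].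

Lemma appears_ext (A : Type) (x x' : int -> A) i i' u :
  (forall k, (k < size u)%N -> x (i + k%:Z) = x' (i' + k%:Z)) ->
  appears x i u -> appears x' i' u.
Proof.
move=> xx' Hu; rewrite /appears {1}Hu; apply/eq_in_map => k.
by rewrite mem_iota add0n => /andP [_ /xx'].
Qed.

Lemma cat_inj (T : Type) (s1 s2 t1 t2 : seq T) :
  size s1 = size t1 -> s1 ++ s2 = t1 ++ t2 -> s1 = t1 /\ s2 = t2.
Proof.
elim: s1 t1 => [|a s1 IH] [|b t1] //= [eq_size] [-> /(IH _ eq_size) [-> ->]] //.
Qed.

Lemma appears_cat (A : Type) (x : int -> A) i u v :
  appears x i (u ++ v) <-> appears x i u /\ appears x (i + (size u)%:Z) v.
Proof.
rewrite /appears size_cat iotaD map_cat add0n -[in iota (size u)](addn0 (size u)).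
rewrite iotaDl -map_comp (eq_map (_ : _ \o _ =1 fun k => x (i + (size u)%:Z + k%:Z))).
  split=> [|[Eu Ev]]; last by rewrite {1}Eu {1}Ev.
  by apply: cat_inj; rewrite size_map size_iota.
by move=> k /=; rewrite PoszD addrA.
Qed.

(** * Sequential compactness of [B^Z] *)

Definition agree (B : Type) (M : nat) (x y : int -> B) :=
  forall h : int, (absz h < M)%N -> x h = y h.

Section ClusterPoint.
Variables (B : finType) (s : nat -> int -> B).

Definition frequent M x := forall K, exists2 m, (K <= m)%N & agree M (s m) x.

(* Pigeonhole on the two new boundary letters. *)
Lemma frequent_extend M x :
  frequent M x -> exists x', agree M x x' /\ frequent M.+1 x'.
Proof.
move=> freq_x; apply: contrapT => no_ext.
pose xp (e : B * B) h :=
  if h == - M%:Z then e.1 else if h == M%:Z then e.2 else x h.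
have rare e : exists K, forall m, (K <= m)%N -> ~ agree M.+1 (s m) (xp e).
  apply: contrapT => not_rare; apply: no_ext; exists (xp e); split.
    by move=> h hM; rewrite /xp ifN_eq ?ifN_eq //; apply/eqP; lia.
  move=> K; apply: contrapT => no_m; apply: not_rare; exists K => m Km agr_m.
  by apply: no_m; exists m.
have [K HK] := finite_uniform_bound
  (fun e K K' le_KK' HK m le_Km => HK m (leq_trans le_KK' le_Km)) rare.
have [m Km agr_m] := freq_x K.
apply: (HK (s m (- M%:Z), s m M%:Z) m Km) => h hM; rewrite /xp /=.
case: eqP => [-> //|h1]; case: eqP => [-> //|h2].
by apply: agr_m; lia.
Qed.

Definition extend M x : int -> B :=
  if pselect (frequent M x) is left freq_x then sval (cid (frequent_extend freq_x))
  else x.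

Lemma extendP M x :
  frequent M x -> agree M x (extend M x) /\ frequent M.+1 (extend M x).
Proof. by rewrite /extend; case: pselect => // freq_x _; case: cid. Qed.

Fixpoint approx M : int -> B :=
  if M is M'.+1 then extend M' (approx M') else s 0%N.

Lemma approx_frequent M : frequent M (approx M).
Proof.
elim: M => [|M IH] /=; last exact: (extendP IH).2.
by move=> K; exists K => // h.
Qed.

Lemma approx_agree M N : (M <= N)%N -> agree M (approx M) (approx N).
Proof.
move=> /subnK <-; elim: (N - M)%N => [|d IH] h hM //=.
rewrite (IH h hM); apply: (extendP (approx_frequent _)).1; lia.
Qed.

Definition cluster_point : int -> B := fun h => approx (absz h).+1 h.

Lemma cluster_pointP M K : exists2 m, (K <= m)%N & agree M (s m) cluster_point.
Proof.
have [m Km agr_m] := approx_frequent M K; exists m => // h hM.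
by rewrite (agr_m h hM) /cluster_point (approx_agree hM (ltnSn _)).
Qed.

End ClusterPoint.

(** * Factor maps are sliding block codes *)

Lemma uniformly_continuous_at0 (A B : finType) (Y : (int -> B) -> Prop)
    (phi : (int -> B) -> int -> A) :
  closed_conf Y -> continuous_on Y phi ->
  exists m : nat, forall y y', Y y -> Y y' ->
    (forall h : int, `|h| <= m%:Z -> y h = y' h) -> phi y 0 = phi y' 0.
Proof.
move=> closedY contphi; apply: contrapT => not_unif.
have bad m : exists e : (int -> B) * (int -> B), [/\ Y e.1, Y e.2,
    forall h : int, `|h| <= m%:Z -> e.1 h = e.2 h & phi e.1 0 <> phi e.2 0].
  apply: contrapT => no_e; apply: not_unif; exists m => y y' Yy Yy' yy'.
  by apply: contrapT => phi_yy'; apply: no_e; exists (y, y').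
have [e badP] := choice bad.
pose y := cluster_point (fun m => (e m).1).
have Yy : Y y.
  apply: closedY => n; have [m _ agr_m] := cluster_pointP (fun m => (e m).1) n.+1 0.
  by exists (e m).1; have [Ye _ _ _] := badP m; split=> // h hn; apply: agr_m; lia.
have [M HM] := contphi _ Yy 0%N.
have [m Mm agr_m] := cluster_pointP (fun m => (e m).1) M.+1 M.
have [Y1 Y2 e12 phi12] := badP m; apply: phi12.
have agr1 h : `|h| <= M%:Z -> (e m).1 h = y h by move=> hM; apply: agr_m; lia.
have agr2 h : `|h| <= M%:Z -> (e m).2 h = y h by move=> hM; rewrite -e12 ?agr1 //; lia.
by rewrite (HM _ Y1 agr1) ?(HM _ Y2 agr2).
Qed.

Lemma sliding_block_radius (A B : finType) (Y : (int -> B) -> Prop)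
    (phi : (int -> B) -> int -> A) :
  subshift Y -> continuous_on Y phi ->
  (forall (g : int) y, Y y -> forall h, phi (shift g y) h = shift g (phi y) h) ->
  exists m : nat, forall y y' j, Y y -> Y y' ->
    (forall h : int, (absz h <= m)%N -> y (h + j) = y' (h + j)) ->
    phi y j = phi y' j.
Proof.
move=> [closedY shiftY] contphi equiv.
have [m Hm] := uniformly_continuous_at0 closedY contphi.
exists m => y y' j Yy Yy' yy'.
have at0 z : Y z -> phi z j = phi (shift (- j) z) 0.
  by move=> Yz; rewrite equiv // /shift sub0r opprK.
rewrite (at0 y Yy) (at0 y' Yy'); apply: Hm; try exact: shiftY.
by move=> h hm; rewrite /shift opprK; apply: yy'; lia.
Qed.

Definition sft_memory (Omega : seq int) : nat := (\max_(w <- Omega) absz w)%N.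

Lemma SFT_mem_of_windows (B : Type) (Y : (int -> B) -> Prop)
    (Omega : seq int) (P : seq B -> Prop) :
  (forall x, Y x <-> (forall g : int, P [seq shift g x w | w <- Omega])) ->
  forall z, (forall g : int, exists y, Y y /\ forall h : int,
     (absz (h + g)%R <= sft_memory Omega)%N -> z h = y h) -> Y z.
Proof.
move=> defY z windows; apply/defY => g; have [y [Yy yz]] := windows g.
have -> : [seq shift g z w | w <- Omega] = [seq shift g y w | w <- Omega].
  apply/eq_in_map => w wO; rewrite /shift; apply: yz; rewrite subrK.
  exact: (@leq_bigmax_seq _ _ _ (fun w : int => absz w)).
exact: (proj1 (defY y) Yy).
Qed.

Definition glue (B : Type) (a : int) (y1 y2 : int -> B) : int -> B :=
  fun h => if h < a then y1 h else y2 h.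

Section Glue.
Variables (B : Type) (a : int) (K : nat) (y1 y2 : int -> B).
Hypothesis y12 : forall h, a - K%:Z <= h < a + K%:Z -> y1 h = y2 h.

Lemma glue_left h : h < a + K%:Z -> glue a y1 y2 h = y1 h.
Proof. by rewrite /glue; case: ifP => // ha hK; rewrite y12 //; lia. Qed.

Lemma glue_right h : a - K%:Z <= h -> glue a y1 y2 h = y2 h.
Proof. by rewrite /glue; case: ifP => // ha hK; rewrite y12 //; lia. Qed.

Lemma glue_SFT (Y : (int -> B) -> Prop) (Omega : seq int) (P : seq B -> Prop) :
  (forall x, Y x <-> (forall g : int, P [seq shift g x w | w <- Omega])) ->
  (sft_memory Omega <= K)%N -> Y y1 -> Y y2 -> Y (glue a y1 y2).
Proof.
move=> defY RK Yy1 Yy2; apply: (SFT_mem_of_windows defY) => g.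
case: (ltrP (- g + (sft_memory Omega)%:Z) (a + K%:Z)) => window.
  by exists y1; split=> // h hR; apply: glue_left; lia.
by exists y2; split=> // h hR; apply: glue_right; lia.
Qed.

End Glue.

Section Replacement.
Variables (A B : finType) (X : (int -> A) -> Prop) (Y : (int -> B) -> Prop)
  (phi : (int -> B) -> int -> A) (Omega : seq int) (P : seq B -> Prop) (m : nat).
Hypothesis shiftY : shift_invariant Y.
Hypothesis defY : forall x, Y x <-> (forall g : int, P [seq shift g x w | w <- Omega]).
Hypothesis equiv : forall (g : int) y, Y y -> forall h, phi (shift g y) h = shift g (phi y) h.
Hypothesis phiX : forall y, Y y -> X (phi y).
Hypothesis phi_onto : forall x, X x -> exists y, Y y /\ forall h, phi y h = x h.
Hypothesis radius_m : forall y y' j, Y y -> Y y' ->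
  (forall h : int, (absz h <= m)%N -> y (h + j) = y' (h + j)) -> phi y j = phi y' j.

Definition margin := maxn m (sft_memory Omega).

Definition block (y : int -> B) (a : int) : {ffun 'I_(2 * margin) -> B} :=
  [ffun i : 'I_(2 * margin) => y (a + (i : nat)%:Z)].

Lemma block_shift d y a : block (shift d y) (a + d) = block y a.
Proof. by apply/ffunP => i; rewrite !ffunE /shift; congr y; lia. Qed.

Lemma block_eq y y' a : block y a = block y' a ->
  forall h : int, a <= h < a + (2 * margin)%N%:Z -> y h = y' h.
Proof.
move=> yy' h ha; have lt_ha : (absz (h - a) < 2 * margin)%N by lia.
have := congr1 (fun b : {ffun 'I_(2 * margin) -> B} => b (Ordinal lt_ha)) yy'; rewrite !ffunE /=.
by have -> : a + (absz (h - a))%:Z = h by lia.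
Qed.

Definition boundary (w : seq A) (q : {ffun 'I_(2 * margin) -> B} * {ffun 'I_(2 * margin) -> B}) :=
  exists y, [/\ Y y, appears (phi y) 0 w,
    block y (- margin%:Z) = q.1 & block y ((size w)%:Z - margin%:Z) = q.2].

Definition boundary_set w := [set q | `[< boundary w q >]].

Lemma centered_preimage p w s : lang X (p ++ w ++ s) ->
  exists z, [/\ Y z, appears (phi z) (- (size p)%:Z) p,
    appears (phi z) 0 w & appears (phi z) (size w)%:Z s].
Proof.
case=> x [Xx [i Hi]]; have [z0 [Yz0 z0x]] := phi_onto Xx.
pose z := shift (- (i + (size p)%:Z)) z0.
have : appears (phi z) (- (size p)%:Z) (p ++ w ++ s).
  by apply: appears_ext Hi => k _; rewrite equiv // /shift opprK z0x; congr x; lia.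
case/appears_cat => Ap; rewrite addNr => /appears_cat [Aw]; rewrite add0r => As.
by exists z; split=> //; apply: shiftY.
Qed.

Lemma replace_word w w' p s : (forall q, boundary w q -> boundary w' q) ->
  lang X (p ++ w ++ s) -> lang X (p ++ w' ++ s).
Proof.
move=> sub /centered_preimage [z [Yz Ap Aw As]].
set n := (size w)%:Z; set n' := (size w')%:Z; set K := margin.
have [mK RK] : (m <= K /\ sft_memory Omega <= K)%N by rewrite leq_maxl leq_maxr.
have n'_ge0 : 0 <= n' by [].
have [y' [Yy' Aw' b1 b2]] :=
  sub (block z (- K%:Z), block z (n - K%:Z)) (ex_intro _ z (And4 Yz Aw erefl erefl)).
pose zs := shift (n' - n) z.
have Yzs : Y zs by apply: shiftY.
have zy' (h : int) : 0 - K%:Z <= h < 0 + K%:Z -> z h = y' h.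
  by move=> hK; rewrite (block_eq b1) //; lia.
pose z1 := glue 0 z y'.
have z1zs (h : int) : n' - K%:Z <= h < n' + K%:Z -> z1 h = zs h.
  move=> hK; rewrite /z1 (glue_right zy'); last by lia.
  apply: (block_eq (a := n' - K%:Z)); last by lia.
  by rewrite b2 /= /zs -(block_shift (n' - n)); congr block; lia.
pose z' := glue n' z1 zs.
have Yz' : Y z' by apply: (glue_SFT z1zs defY RK) => //; apply: (glue_SFT zy' defY RK).
exists (phi z'); split; first exact: phiX.
exists (- (size p)%:Z); apply/appears_cat; split.
  apply: appears_ext Ap => k k_p; apply: radius_m => // h hm.
  by rewrite /z' (glue_left z1zs) /z1 ?(glue_left zy') //; lia.
rewrite appears_cat; have -> : - (size p)%:Z + (size p)%:Z = 0 by lia.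
split.
  apply: appears_ext Aw' => k k_w'; apply: radius_m => // h hm.
  by rewrite /z' (glue_left z1zs) /z1 ?(glue_right zy') //; lia.
rewrite add0r; apply: appears_ext As => k _.
rewrite -[phi z' _](radius_m Yzs Yz'); last by move=> h hm; rewrite /z' (glue_right z1zs) //; lia.
by rewrite equiv // /shift; congr phi; lia.
Qed.

Lemma bounded_replacement : exists N, forall p w s, lang X w -> lang X (p ++ w ++ s) ->
  exists2 w', lang X w' & (size w' <= N)%N /\ lang X (p ++ w' ++ s).
Proof.
have [N HN] := bounded_fiber_representatives (lang X) boundary_set size.
exists N => p w s Lw Lpws; have [w' [Lw' Nw' same_bd]] := HN w Lw.
exists w' => //; split=> //; apply: replace_word Lpws => q bd_q.
have : q \in boundary_set w by rewrite inE; apply/asboolP.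
by rewrite -same_bd inE => /asboolP.
Qed.

End Replacement.

Lemma irreducible_sofic_W (A : finType) (X : (int -> A) -> Prop) :
  irreducible X -> sofic X -> W_subshift X.
Proof.
move=> irrX [B [Y [phi [subY [[Omega [P defY]] [phiX [phi_onto [contphi equiv]]]]]]]].
have [m radius_m] := sliding_block_radius subY contphi equiv.
have [N HN] := bounded_replacement subY.2 defY equiv phiX phi_onto radius_m.
exists N => u v Lu Lv; have [c [Lc Lucv]] := irrX u v Lu Lv.
by have [c' Lc' [Nc' Luc'v]] := HN u c v Lc Lucv; exists c'.
Qed.

Lemma SFT_sofic (A : finType) (X : (int -> A) -> Prop) :
  subshift X -> is_SFT X -> sofic X.
Proof.
move=> subX SFTX; exists A, X, id; do 4!split=> //; first by move=> x Xx; exists x.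
by split=> // y _ n; exists n => y' _ yy' h hn; apply: yy'.
Qed.

Theorem proposition4p4 (A : finType) :
  (forall X : (int -> A) -> Prop,
      subshift X -> irreducible X -> sofic X -> W_subshift X) /\
  (forall X : (int -> A) -> Prop,
      subshift X -> irreducible X -> is_SFT X -> W_subshift X).
Proof.
split=> X subX irrX; first exact: irreducible_sofic_W.
by move=> SFTX; apply: irreducible_sofic_W => //; apply: SFT_sofic.
Qed.
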